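(* Let $\mathcal C$ be a category, $I:\mathcal B\to\mathcal C$ the inclusion of a full subcategory with a left adjoint $S:\mathcal C\to\mathcal B$ (unit $\alpha:1\to IS$, counit $SI\cong1$), and $J:\mathcal D\to\mathcal C$ the inclusion of a full subcategory with a right adjoint $T:\mathcal C\to\mathcal D$ (unit $1\cong TJ$, counit $\epsilon:JT\to1$), and suppose $IS\epsilon:ISJT\to IS$ and $JT\alpha:JT\to JTIS$ are isomorphisms. Then $TI:\mathcal B\to\mathcal D$ is left adjoint to $SJ:\mathcal D\to\mathcal B$, and each of $TI$ and $SJ$ is an equivalence of categories. *)

(* Morphism
   equality is Leibniz equality. *)

Record Category := {
  Ob : Type;
  Hom : Ob -> Ob -> Type;
  idm : forall x, Hom x x;
  comp : forall x y z, Hom y z -> Hom x y -> Hom x z;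
  comp_id_l : forall x y (f : Hom x y), comp x y y (idm y) f = f;
  comp_id_r : forall x y (f : Hom x y), comp x x y f (idm x) = f;
  comp_assoc : forall w x y z (h : Hom y z) (g : Hom x y) (f : Hom w x),
      comp w x z (comp x y z h g) f = comp w y z h (comp w x y g f)
}.

Arguments idm {C} x : rename.
Arguments comp {C x y z} g f : rename.

Definition is_iso {C : Category} {x y : Ob C} (f : Hom C x y) : Prop :=
  exists g : Hom C y x, comp g f = idm x /\ comp f g = idm y.

Record Functor (C D : Category) := {
  fobj : Ob C -> Ob D;
  fmap : forall x y, Hom C x y -> Hom D (fobj x) (fobj y);
  fmap_id : forall x, fmap x x (idm x) = idm (fobj x);
  fmap_comp : forall x y z (g : Hom C y z) (f : Hom C x y),
      fmap x z (comp g f) = comp (fmap y z g) (fmap x y f)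
}.

Arguments fobj {C D} F x : rename.
Arguments fmap {C D} F {x y} f : rename.

Definition FId (C : Category) : Functor C C.
Proof.
  refine {| fobj := fun x => x; fmap := fun x y f => f |}; reflexivity.
Defined.

(* FComp F G is the composite G o F (first F, then G). *)
Definition FComp {C D E : Category} (F : Functor C D) (G : Functor D E)
  : Functor C E.
Proof.
  refine {| fobj := fun x => fobj G (fobj F x);
            fmap := fun x y f => fmap G (fmap F f) |}.
  - intros x. rewrite (fmap_id _ _ F), (fmap_id _ _ G). reflexivity.
  - intros x y z g f. rewrite (fmap_comp _ _ F), (fmap_comp _ _ G).
    reflexivity.
Defined.

Record NatTrans {C D : Category} (F G : Functor C D) := {
  comp_nt : forall x, Hom D (fobj F x) (fobj G x);
  naturality : forall x y (f : Hom C x y),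
      comp (fmap G f) (comp_nt x) = comp (comp_nt y) (fmap F f)
}.

Arguments comp_nt {C D F G} a x : rename.

Definition nat_iso {C D : Category} {F G : Functor C D} (a : NatTrans F G)
  : Prop := forall x, is_iso (comp_nt a x).

Definition FullSub (C : Category) (P : Ob C -> Prop) : Category.
Proof.
  refine {| Ob := { x : Ob C | P x };
            Hom := fun a b => Hom C (proj1_sig a) (proj1_sig b);
            idm := fun a => idm (proj1_sig a);
            comp := fun a b c g f => comp g f |}.
  - intros; apply comp_id_l.
  - intros; apply comp_id_r.
  - intros; apply comp_assoc.
Defined.

Definition Incl (C : Category) (P : Ob C -> Prop) : Functor (FullSub C P) C.
Proof.
  refine {| fobj := fun a : Ob (FullSub C P) => proj1_sig a;
            fmap := fun (a b : Ob (FullSub C P)) (f : Hom (FullSub C P) a b) => (f : Hom C (proj1_sig a) (proj1_sig b)) |};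
    reflexivity.
Defined.

Record Adjunction {C D : Category} (F : Functor C D) (G : Functor D C) := {
  unit : NatTrans (FId C) (FComp F G);
  counit : NatTrans (FComp G F) (FId D);
  triangle_F : forall x : Ob C,
      comp (comp_nt counit (fobj F x)) (fmap F (comp_nt unit x))
      = idm (fobj F x);
  triangle_G : forall y : Ob D,
      comp (fmap G (comp_nt counit y)) (comp_nt unit (fobj G y))
      = idm (fobj G y)
}.

Arguments unit {C D F G} a : rename.
Arguments counit {C D F G} a : rename.

Definition IsEquivalence {C D : Category} (F : Functor C D) : Prop :=
  exists G : Functor D C,
    (exists a : NatTrans (FComp F G) (FId C), nat_iso a) /\
    (exists b : NatTrans (FComp G F) (FId D), nat_iso b).

From Stdlib Require Import ClassicalEpsilon.

(* SJ is left adjoint to TI, with unit [d ↦ Tα_{Jd} ∘ η_d] and counit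
   [x ↦ β_x ∘ Sε_{Ix}]: the triangle identities come from the naturality of
   α and ε and the triangle identities of S ⊣ I and J ⊣ T alone.  Both are
   invertible: η and β because the subcategories are full, Tα and Sε by
   hypothesis.  An adjunction with invertible unit and counit is an adjoint
   equivalence, and inverting unit and counit yields the reverse adjunction
   TI ⊣ SJ. *)

Section Isomorphisms.
Context {C : Category}.

Lemma is_iso_comp {x y z : Ob C} (g : Hom C y z) (f : Hom C x y) :
  is_iso g -> is_iso f -> is_iso (comp g f).
Proof.
  intros [g' [Hg'g Hgg']] [f' [Hf'f Hff']].
  exists (comp f' g'); split.
  - rewrite comp_assoc, <- (comp_assoc _ _ _ _ _ g'), Hg'g, comp_id_l; exact Hf'f.
  - rewrite comp_assoc, <- (comp_assoc _ _ _ _ _ f), Hff', comp_id_l; exact Hgg'.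
Qed.

Definition iso_inv {x y : Ob C} {f : Hom C x y} (Hf : is_iso f) : Hom C y x :=
  proj1_sig (constructive_indefinite_description _ Hf).

Lemma iso_inv_l {x y : Ob C} {f : Hom C x y} (Hf : is_iso f) :
  comp (iso_inv Hf) f = idm x.
Proof. exact (proj1 (proj2_sig (constructive_indefinite_description _ Hf))). Qed.

Lemma iso_inv_r {x y : Ob C} {f : Hom C x y} (Hf : is_iso f) :
  comp f (iso_inv Hf) = idm y.
Proof. exact (proj2 (proj2_sig (constructive_indefinite_description _ Hf))). Qed.

Lemma iso_inv_iso {x y : Ob C} {f : Hom C x y} (Hf : is_iso f) :
  is_iso (iso_inv Hf).
Proof. exists f; split; [apply iso_inv_r | apply iso_inv_l]. Qed.

Lemma iso_inv_unique_l {x y : Ob C} {f : Hom C x y} (Hf : is_iso f) (g : Hom C y x) :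
  comp g f = idm x -> iso_inv Hf = g.
Proof.
  intros Hgf.
  rewrite <- (comp_id_l _ _ _ (iso_inv Hf)), <- Hgf, comp_assoc, iso_inv_r.
  apply comp_id_r.
Qed.

Lemma iso_inv_unique_r {x y : Ob C} {f : Hom C x y} (Hf : is_iso f) (g : Hom C y x) :
  comp f g = idm y -> iso_inv Hf = g.
Proof.
  intros Hfg.
  rewrite <- (comp_id_r _ _ _ (iso_inv Hf)), <- Hfg, <- comp_assoc, iso_inv_l.
  apply comp_id_l.
Qed.

End Isomorphisms.

Lemma fmap_iso_inv_r {C D : Category} (F : Functor C D) {x y : Ob C}
  {f : Hom C x y} (Hf : is_iso f) :
  comp (fmap F f) (fmap F (iso_inv Hf)) = idm (fobj F y).
Proof. rewrite <- fmap_comp, iso_inv_r; apply fmap_id. Qed.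

Lemma fmap_iso_inv_l {C D : Category} (F : Functor C D) {x y : Ob C}
  {f : Hom C x y} (Hf : is_iso f) :
  comp (fmap F (iso_inv Hf)) (fmap F f) = idm (fobj F x).
Proof. rewrite <- fmap_comp, iso_inv_l; apply fmap_id. Qed.

Definition NatTrans_inv {C D : Category} {F G : Functor C D}
  (a : NatTrans F G) (Ha : nat_iso a) : NatTrans G F.
Proof.
  refine {| comp_nt := fun x => iso_inv (Ha x) |}.
  intros x y f.
  rewrite <- (comp_id_l _ _ _ (comp (fmap F f) _)), <- (iso_inv_l (Ha y)).
  rewrite !comp_assoc, <- (comp_assoc _ _ _ _ _ (comp_nt a y)), <- naturality.
  rewrite !comp_assoc, iso_inv_r, comp_id_r; reflexivity.
Defined.

Lemma NatTrans_inv_comp {C D : Category} {F G : Functor C D}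
  (a : NatTrans F G) (Ha : nat_iso a) (x : Ob C) :
  comp_nt (NatTrans_inv a Ha) x = iso_inv (Ha x).
Proof. reflexivity. Qed.

Lemma nat_iso_inv {C D : Category} {F G : Functor C D}
  (a : NatTrans F G) (Ha : nat_iso a) : nat_iso (NatTrans_inv a Ha).
Proof. intros x; apply iso_inv_iso. Qed.

Section AdjointEquivalence.
Context {C D : Category} {F : Functor C D} {G : Functor D C}.
Variable adj : Adjunction G F.
Hypotheses (unit_iso : nat_iso (unit adj)) (counit_iso : nat_iso (counit adj)).

Definition Adjunction_flip : Adjunction F G.
Proof.
  refine {| unit := NatTrans_inv (counit adj) counit_iso;
            counit := NatTrans_inv (unit adj) unit_iso |}.
  - intros x; rewrite !NatTrans_inv_comp.
    rewrite (iso_inv_unique_l (unit_iso (fobj F x)) _ (triangle_G _ _ adj x)).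
    exact (fmap_iso_inv_r F _).
  - intros y; rewrite !NatTrans_inv_comp.
    rewrite (iso_inv_unique_r (counit_iso (fobj G y)) _ (triangle_F _ _ adj y)).
    exact (fmap_iso_inv_l G _).
Defined.

Lemma right_adjoint_equivalence : IsEquivalence F.
Proof.
  exists G; split.
  - exists (counit adj); exact counit_iso.
  - exists (NatTrans_inv (unit adj) unit_iso); apply nat_iso_inv.
Qed.

Lemma left_adjoint_equivalence : IsEquivalence G.
Proof.
  exists F; split.
  - exists (NatTrans_inv (unit adj) unit_iso); apply nat_iso_inv.
  - exists (counit adj); exact counit_iso.
Qed.

End AdjointEquivalence.

Section Reflection.
Context {C : Category} {P : Ob C -> Prop} {F : Functor C (FullSub C P)}.
Variable adj : Adjunction F (Incl C P).

Lemma reflection_unit_counit (y : Ob (FullSub C P)) :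
  @comp C _ _ _ (comp_nt (unit adj) (proj1_sig y)) (comp_nt (counit adj) y)
  = idm (proj1_sig (fobj F (proj1_sig y))).
Proof.
  pose proof (naturality _ _ (counit adj) _ _ (comp_nt (unit adj) (proj1_sig y)))
    as Hnat.
  cbn in Hnat |- *; rewrite Hnat; exact (triangle_F _ _ adj (proj1_sig y)).
Qed.

Lemma reflection_counit_iso (y : Ob (FullSub C P)) : is_iso (comp_nt (counit adj) y).
Proof.
  exists (comp_nt (unit adj) (proj1_sig y)); split.
  - exact (reflection_unit_counit y).
  - exact (triangle_G _ _ adj y).
Qed.

End Reflection.

Section Coreflection.
Context {C : Category} {P : Ob C -> Prop} {G : Functor C (FullSub C P)}.
Variable adj : Adjunction (Incl C P) G.

Lemma coreflection_counit_unit (d : Ob (FullSub C P)) :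
  @comp C _ _ _ (comp_nt (unit adj) d) (comp_nt (counit adj) (proj1_sig d))
  = idm (proj1_sig (fobj G (proj1_sig d))).
Proof.
  pose proof (naturality _ _ (unit adj) _ _ (comp_nt (counit adj) (proj1_sig d)))
    as Hnat.
  cbn in Hnat |- *; rewrite <- Hnat; exact (triangle_G _ _ adj (proj1_sig d)).
Qed.

Lemma coreflection_unit_iso (d : Ob (FullSub C P)) : is_iso (comp_nt (unit adj) d).
Proof.
  exists (comp_nt (counit adj) (proj1_sig d)); split.
  - exact (triangle_F _ _ adj d).
  - exact (coreflection_counit_unit d).
Qed.

End Coreflection.

Section ReflectionAndCoreflection.
Context {C : Category} {PB PD : Ob C -> Prop}.
Context {S : Functor C (FullSub C PB)} {T : Functor C (FullSub C PD)}.
Variables (adjS : Adjunction S (Incl C PB)) (adjT : Adjunction (Incl C PD) T).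

Local Notation "g ∘ f" := (@comp C _ _ _ g f) (at level 40, left associativity).
Local Notation alpha := (comp_nt (unit adjS)).
Local Notation beta := (comp_nt (counit adjS)).
Local Notation eta := (comp_nt (unit adjT)).
Local Notation eps := (comp_nt (counit adjT)).

Lemma fmap_T_alpha_factor (X : Ob C) :
  fmap T (alpha X)
  = fmap T (fmap S (eps X)) ∘ (fmap T (alpha (proj1_sig (fobj T X))) ∘ eta (fobj T X)).
Proof.
  pose proof (naturality _ _ (unit adjS) _ _ (eps X)) as Hnat; cbn in Hnat.
  pose proof (fmap_comp _ _ T) as TC; cbn in TC.
  cbn; rewrite <- comp_assoc, <- TC, Hnat, TC, comp_assoc.
  pose proof (triangle_G _ _ adjT X) as Htri; cbn in Htri; rewrite Htri.
  symmetry; apply comp_id_r.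
Qed.

Lemma fmap_S_eps_factor (X : Ob C) :
  fmap S (eps X)
  = beta (fobj S X) ∘ fmap S (eps (proj1_sig (fobj S X))) ∘ fmap S (fmap T (alpha X)).
Proof.
  pose proof (naturality _ _ (counit adjT) _ _ (alpha X)) as Hnat; cbn in Hnat.
  pose proof (fmap_comp _ _ S) as SC; cbn in SC.
  cbn; rewrite comp_assoc, <- SC, <- Hnat, SC, <- comp_assoc.
  pose proof (triangle_F _ _ adjS X) as Htri; cbn in Htri; rewrite Htri.
  symmetry; apply comp_id_l.
Qed.

Definition SJ_TI_unit_comp (d : Ob (FullSub C PD)) :
  Hom (FullSub C PD) d (fobj T (proj1_sig (fobj S (proj1_sig d)))) :=
  comp (fmap T (alpha (proj1_sig d))) (eta d).

Definition SJ_TI_counit_comp (x : Ob (FullSub C PB)) :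
  Hom (FullSub C PB) (fobj S (proj1_sig (fobj T (proj1_sig x)))) x :=
  comp (beta x) (fmap S (eps (proj1_sig x))).

Definition SJ_TI_unit :
  NatTrans (FId (FullSub C PD)) (FComp (FComp (Incl C PD) S) (FComp (Incl C PB) T)).
Proof.
  exists SJ_TI_unit_comp.
  intros d d' f.
  pose proof (naturality _ _ (unit adjS) _ _ f) as Halpha; cbn in Halpha.
  pose proof (naturality _ _ (unit adjT) _ _ f) as Heta; cbn in Heta.
  pose proof (fmap_comp _ _ T) as TC; cbn in TC.
  cbn; rewrite <- comp_assoc, <- TC, Halpha, TC, !comp_assoc, Heta.
  reflexivity.
Defined.

Definition SJ_TI_counit :
  NatTrans (FComp (FComp (Incl C PB) T) (FComp (Incl C PD) S)) (FId (FullSub C PB)).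
Proof.
  exists SJ_TI_counit_comp.
  intros x x' f.
  pose proof (naturality _ _ (counit adjS) _ _ f) as Hbeta; cbn in Hbeta.
  pose proof (naturality _ _ (counit adjT) _ _ f) as Heps; cbn in Heps.
  pose proof (fmap_comp _ _ S) as SC; cbn in SC.
  cbn; rewrite comp_assoc, <- SC, <- Heps, SC, <- !comp_assoc, Hbeta.
  reflexivity.
Defined.

Definition SJ_TI_adjunction : Adjunction (FComp (Incl C PD) S) (FComp (Incl C PB) T).
Proof.
  refine {| unit := SJ_TI_unit; counit := SJ_TI_counit |}.
  - intros d.
    pose proof (fmap_comp _ _ S) as SC; cbn in SC.
    pose proof (fmap_id _ _ S) as SI; cbn in SI.
    pose proof (triangle_F _ _ adjT d) as Htri; cbn in Htri.
    pose proof (fmap_S_eps_factor (proj1_sig d)) as Hfac; cbn in Hfac.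
    cbn; rewrite SC, <- comp_assoc, <- Hfac, <- SC, Htri.
    apply SI.
  - intros x.
    pose proof (fmap_comp _ _ T) as TC; cbn in TC.
    pose proof (fmap_id _ _ T) as TI; cbn in TI.
    pose proof (triangle_G _ _ adjS x) as Htri; cbn in Htri.
    pose proof (fmap_T_alpha_factor (proj1_sig x)) as Hfac; cbn in Hfac.
    cbn; rewrite TC, comp_assoc, <- Hfac, <- TC, Htri.
    apply TI.
Defined.

Hypothesis S_eps_iso : forall X : Ob C, is_iso (fmap S (eps X)).
Hypothesis T_alpha_iso : forall X : Ob C, is_iso (fmap T (alpha X)).

Lemma SJ_TI_unit_iso : nat_iso SJ_TI_unit.
Proof.
  intros d; apply is_iso_comp.
  - apply T_alpha_iso.
  - apply (coreflection_unit_iso adjT).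
Qed.

Lemma SJ_TI_counit_iso : nat_iso SJ_TI_counit.
Proof.
  intros x; apply is_iso_comp.
  - apply (reflection_counit_iso adjS).
  - apply S_eps_iso.
Qed.

End ReflectionAndCoreflection.

Theorem corollaryA6 (C : Category) (PB PD : Ob C -> Prop)
  (S : Functor C (FullSub C PB)) (T : Functor C (FullSub C PD))
  (adjS : Adjunction S (Incl C PB))   (* S -| I, unit alpha *)
  (adjT : Adjunction (Incl C PD) T)   (* J -| T, counit epsilon *)
  (HISeps : forall X : Ob C,
      is_iso (fmap (Incl C PB) (fmap S (comp_nt (counit adjT) X))))
  (HJTalpha : forall X : Ob C,
      is_iso (fmap (Incl C PD) (fmap T (comp_nt (unit adjS) X)))) :
  inhabited (Adjunction (FComp (Incl C PB) T) (FComp (Incl C PD) S)) /\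
  IsEquivalence (FComp (Incl C PB) T) /\
  IsEquivalence (FComp (Incl C PD) S).
Proof.
  pose (adj := SJ_TI_adjunction adjS adjT).
  pose proof (SJ_TI_unit_iso adjS adjT HJTalpha) as unit_iso.
  pose proof (SJ_TI_counit_iso adjS adjT HISeps) as counit_iso.
  split; [| split].
  - exact (inhabits (Adjunction_flip adj unit_iso counit_iso)).
  - exact (right_adjoint_equivalence adj unit_iso counit_iso).
  - exact (left_adjoint_equivalence adj unit_iso counit_iso).
Qed.
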